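(* Let $Y$ be a finite connected simple undirected graph with vertex set $\{1,\dots,n\}$, and let $\pi\in S_Y$. If $s,s'\in\{0,1,\dots,n-1\}$ with $s\neq s'$, then $[\boldsymbol{\sigma}_s(\pi)]_Y\neq[\boldsymbol{\sigma}_{s'}(\pi)]_Y$. Equivalently, for $g,g'\in C_n$ with $g\neq g'$ one has $[g\cdot\pi]_Y\neq[g'\cdot\pi]_Y$.
   Context: $S_Y$ denotes the set of permutations (total orders) $\pi=(\pi_1,\dots,\pi_n)$ of the vertex set of $Y$. The update graph $U(Y)$ has vertex set $S_Y$, two permutations being adjacent if they differ exactly by swapping two consecutive entries $\pi_k,\pi_{k+1}$ with $\{\pi_k,\pi_{k+1}\}$ not an edge of $Y$; $\pi\sim_Y\pi'$ iff $\pi,\pi'$ lie in the same connected component of $U(Y)$, and $[\pi]_Y$ denotes the class of $\pi$. Let $\sigma=(n,n-1,\dots,2,1)\in S_n$ (cycle notation) and $C_n=\langle\sigma\rangle$, acting on $S_Y$ by $g\cdot(\pi_1,\dots,\pi_n)=(\pi_{g^{-1}(1)},\dots,\pi_{g^{-1}(n)})$. Set $\boldsymbol{\sigma}_s(\pi)=\sigma^s\cdot\pi$; thus $\boldsymbol{\sigma}_1(\pi)=(\pi_2,\dots,\pi_n,\pi_1)$ is the cyclic left shift. *)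

From mathcomp Require Import all_boot all_fingroup.
Set Implicit Arguments. Unset Strict Implicit. Unset Printing Implicit Defensive.

(* Vertices of Y are 'I_n = {0,...,n-1} (0-indexed version of {1,...,n}). *)
Definition simple_graph n (e : rel 'I_n) := symmetric e /\ irreflexive e.
Definition connected_graph n (e : rel 'I_n) := forall x y, connect e x y.

(* A total order pi = (pi_1,...,pi_n) is a permutation p : {perm 'I_n}
   with p k = pi_(k+1) (position -> vertex). *)

Definition update_adj n (e : rel 'I_n) : rel {perm 'I_n} :=
  fun p q => [exists k : 'I_n, exists k' : 'I_n,
     [&& val k' == (val k).+1, ~~ e (p k) (p k') & q == (tperm k k' * p)%g]].

Definition upd_equiv n (e : rel 'I_n) (p q : {perm 'I_n}) : bool :=
  connect (update_adj e) p q.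

(* sigma = (n, n-1, ..., 2, 1) in cycle notation: k |-> k-1 (mod n),
   i.e. in 0-indexed form the cyclic predecessor ord_pred. *)
Definition sigma n : {perm 'I_n} := perm (@ord_pred_inj n).

(* The action g . (pi_1,...,pi_n) = (pi_{g^-1(1)}, ..., pi_{g^-1(n)}):
   as a position->vertex map this is p o g^-1, which is g^-1 * p in
   mathcomp's (left-to-right) composition convention. *)
Definition act_pos n (g p : {perm 'I_n}) : {perm 'I_n} := (g^-1 * p)%g.

Definition bsigma n (s : nat) (p : {perm 'I_n}) : {perm 'I_n} :=
  act_pos ((sigma n) ^+ s)%g p.

From mathcomp Require Import all_boot all_fingroup.
From mathcomp Require Import zify.

Set Implicit Arguments.
Unset Strict Implicit.
Unset Printing Implicit Defensive.

(* For an edge {u, v} of Y, no update move can swap u and v, so whether u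
   precedes v is an invariant of the class [pi]_Y.  If sigma_s(pi) and
   sigma_s'(pi) differ by a nontrivial rotation of positions, the vertices
   that wrap around form a proper nonempty set; by connectedness some edge
   leaves it, and the rotation reverses the order of its endpoints. *)

Lemma connect_cut_edge (T : finType) (e : rel T) (a : pred T) x y :
  connect e x y -> a x -> ~~ a y -> exists u v, [&& e u v, a u & ~~ a v].
Proof.
case/connectP=> s + -> {y}; elim: s x => [|z s IHs] x /=; first by move=> _ ->.
case/andP=> exz pz ax ay; case az: (a z); first exact: IHs z pz az ay.
by exists x, z; rewrite exz ax az.
Qed.

Lemma tperm_succ_ltE n (k k' i j : 'I_n) : val k' = (val k).+1 ->
  (i, j) != (k, k') -> (i, j) != (k', k) ->
  (tperm k k' i < tperm k k' j) = (i < j).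
Proof.
have eq_val (a b : 'I_n) : (a == b) = (val a == val b) by [].
rewrite !xpair_eqE /= => kk'.
by do 2 case: tpermP => [->|->|/eqP + /eqP]; rewrite ?eq_val /=; lia.
Qed.

Section UpdateGraph.

Variables (n : nat) (e : rel 'I_n).

Definition flips_edge (p q : {perm 'I_n}) :=
  exists u v, e u v && (((p^-1)%g u < (p^-1)%g v) != ((q^-1)%g u < (q^-1)%g v)).

Lemma flips_edge_sym p q : flips_edge p q -> flips_edge q p.
Proof. by case=> u [v /andP[euv flip]]; exists u, v; rewrite euv eq_sym. Qed.

Hypothesis e_sym : symmetric e.

Lemma update_adj_order u v p q : e u v -> update_adj e p q ->
  ((p^-1)%g u < (p^-1)%g v) = ((q^-1)%g u < (q^-1)%g v).
Proof.
move=> euv /existsP[k /existsP[k' /and3P[/eqP kk' nek /eqP ->]]].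
rewrite invMg tpermV !permM tperm_succ_ltE //.
  by apply: contraNneq nek => -[<- <-]; rewrite !permKV euv.
by apply: contraNneq nek => -[<- <-]; rewrite !permKV e_sym euv.
Qed.

Lemma upd_equiv_order u v p q : e u v -> upd_equiv e p q ->
  ((p^-1)%g u < (p^-1)%g v) = ((q^-1)%g u < (q^-1)%g v).
Proof.
move=> euv; apply: (closed_connect (a := [pred r : {perm 'I_n} | _])).
by move=> r r'; apply: update_adj_order.
Qed.

Lemma flips_edge_not_upd_equiv p q : flips_edge p q -> ~~ upd_equiv e p q.
Proof.
case=> u [v /andP[euv flip]]; apply: contra flip => pq.
by rewrite (upd_equiv_order euv pq).
Qed.

Hypothesis e_conn : connected_graph e.

Lemma rotation_flips_edge (p q : {perm 'I_n}) c : 0 < c < n ->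
  (forall v, val ((q^-1)%g v) = ((p^-1)%g v + c) %% n) -> flips_edge p q.
Proof.
move=> /andP[c_gt0 c_lt_n] qE.
have first_pos : 0 < n by lia.
have last_pos : n.-1 < n by lia.
pose stays := [pred v | (p^-1)%g v + c < n].
have stays_first : stays (p (Ordinal first_pos)) by rewrite /= permK.
have moves_last : ~~ stays (p (Ordinal last_pos)) by rewrite /= permK /=; lia.
have [u [v /and3P[euv /= su mv]]] := connect_cut_edge (e_conn _ _) stays_first moves_last.
exists u, v; rewrite euv !qE; move: (ltn_ord ((p^-1)%g v)) su mv.
move: ((p^-1)%g u : nat) ((p^-1)%g v : nat) => i j lt_jn su; rewrite -leqNgt => wraps.
by rewrite (modn_small su) -(subnK wraps) modnDr modn_small; lia.
Qed.

End UpdateGraph.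

Lemma sigma_expK n k (x : 'I_n) : (((sigma n) ^+ k)%g x + k) %% n = x.
Proof.
elim: k => [|k IHk]; first by rewrite expg0 perm1 addn0 modn_small.
rewrite expgSr permM permE /= modnDml -[RHS]IHk -[RHS](modnDr _ n).
by case: ((sigma n ^+ k)%g x) => y lt_yn /=; congr (_ %% _); lia.
Qed.

Lemma sigma_exp_order n : ((sigma n) ^+ n)%g = 1%g.
Proof.
apply/permP => x; apply/val_inj.
by rewrite perm1 -[RHS](sigma_expK n) modnDr modn_small.
Qed.

Lemma bsigma_invE n s d (p : {perm 'I_n}) v :
  val (((bsigma s p)^-1)%g v) = (((bsigma (s + d) p)^-1)%g v + d) %% n.
Proof. by rewrite /bsigma /act_pos !invMg !invgK !permM expgD permM sigma_expK. Qed.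

Lemma bsigma_flips_edge n (e : rel 'I_n) (p : {perm 'I_n}) s s' :
  connected_graph e -> s < s' < n -> flips_edge e (bsigma s' p) (bsigma s p).
Proof.
move=> e_conn /andP[lt_ss' lt_s'n]; apply: (rotation_flips_edge e_conn (c := s' - s)).
  by rewrite subn_gt0 lt_ss' /=; lia.
by move=> v; rewrite (bsigma_invE s (s' - s)) subnKC // ltnW.
Qed.

Theorem proposition1 (n : nat) (e : rel 'I_n) :
  simple_graph e -> connected_graph e ->
  forall p : {perm 'I_n},
    (forall s s' : nat, s < n -> s' < n -> s != s' ->
       ~~ upd_equiv e (bsigma s p) (bsigma s' p)) /\
    (forall g g' : {perm 'I_n}, g \in <[sigma n]>%g -> g' \in <[sigma n]>%g ->
       g != g' -> ~~ upd_equiv e (act_pos g p) (act_pos g' p)).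
Proof.
move=> [e_sym _] e_conn p.
have shifts_distinct s s' : s < n -> s' < n -> s != s' ->
    ~~ upd_equiv e (bsigma s p) (bsigma s' p).
  move=> lt_sn lt_s'n ne_ss'; apply: (flips_edge_not_upd_equiv e_sym).
  move: ne_ss'; case: ltngtP => // [lt_ss' | lt_s's] _.
  - by apply/flips_edge_sym/bsigma_flips_edge; rewrite ?lt_ss'.
  - by apply: bsigma_flips_edge; rewrite ?lt_s's.
split=> // _ _ /cycleP[i ->] /cycleP[j ->].
have [n0 | n_gt0] := posnP n.
  have perm0_eq (g g' : {perm 'I_n}) : g = g' by apply/permP => -[m lt_mn]; exfalso; lia.
  by rewrite (perm0_eq (sigma n ^+ i)%g (sigma n ^+ j)%g) eqxx.
rewrite -(expg_mod i (sigma_exp_order n)) -(expg_mod j (sigma_exp_order n)) => ne_ij.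
apply: shifts_distinct; rewrite ?ltn_pmod //.
by apply: contraNneq ne_ij => ->.
Qed.
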